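(* Let $E$ be a finite-dimensional real Euclidean space with inner product $\langle\cdot,\cdot\rangle$, let $\|\cdot\|_{(1)},\dots,\|\cdot\|_{(n)}$ be norms on $E$, and for each $i$ let $\mathrm{LMO}_i$ be a linear minimization oracle for the unit ball of $\|\cdot\|_{(i)}$, i.e. $\mathrm{LMO}_i(\mathbf{M})\in\arg\min_{\|\mathbf{D}\|_{(i)}\le1}\langle\mathbf{M},\mathbf{D}\rangle$. Consider the LMO-based algorithms $\mathbf{X}^{t+1}-\mathbf{X}^t=\gamma_t\,\mathrm{LMO}_i(\mathbf{M}^t)$, $i=1,\dots,n$. For arbitrary $\alpha_1,\dots,\alpha_n\ge 0$, not all zero, the algorithm with update $$\mathbf{X}^{t+1}-\mathbf{X}^t=\gamma_t\sum_{i=1}^n\alpha_i\,\mathrm{LMO}_i(\mathbf{M}^t)$$ is itself an LMO-based algorithm: its update is $\mathbf{X}^{t+1}-\mathbf{X}^t=\gamma_t\,\mathrm{LMO}(\mathbf{M}^t)$ where $\mathrm{LMO}(\mathbf{M})\in\arg\min_{\|\mathbf{D}\|\le1}\langle\mathbf{M},\mathbf{D}\rangle$ is a linear minimization oracle for the unit ball of the norm $\|\cdot\|$ dual to $\sum_{i=1}^n\alpha_i\|\cdot\|_{(i)}^\dagger$.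
   Context: For a norm $\|\cdot\|$ on $E$, its dual norm is $\|\mathbf{M}\|^\dagger=\sup_{\|\mathbf{D}\|\le1}\langle\mathbf{M},\mathbf{D}\rangle$. Here $\mathbf{M}^t\in E$ denotes the effective update direction at iteration $t$ (e.g. a stochastic gradient or a momentum buffer) and $\gamma_t>0$ is the step size; an LMO-based algorithm is one whose update has the form $\mathbf{X}^{t+1}=\mathbf{X}^t+\gamma_t\,\mathrm{LMO}(\mathbf{M}^t)$ for an LMO over the unit ball of some norm. *)

From HB Require Import structures.
From mathcomp Require Import all_boot all_order all_algebra.
From mathcomp Require Import all_classical all_reals.
Set Implicit Arguments. Unset Strict Implicit. Unset Printing Implicit Defensive.
Import Order.TTheory GRing.Theory Num.Theory.
Local Open Scope classical_set_scope.
Local Open Scope ring_scope.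

(* The Euclidean space E is modelled as row vectors 'rV[R]_d with the
   standard inner product. *)
Definition inner (R : realType) (d : nat) (u v : 'rV[R]_d) : R := (u *m v^T) 0 0.

Definition is_norm (R : realType) (d : nat) (N : 'rV[R]_d -> R) : Prop :=
  [/\ forall x, N x = 0 -> x = 0,
      forall (a : R) x, N (a *: x) = `|a| * N x &
      forall x y, N (x + y) <= N x + N y].

Definition dual_norm (R : realType) (d : nat) (N : 'rV[R]_d -> R)
  (M : 'rV[R]_d) : R :=
  sup [set inner M D | D in [set D | N D <= 1]].

Definition is_LMO (R : realType) (d : nat) (N : 'rV[R]_d -> R)
  (L : 'rV[R]_d -> 'rV[R]_d) : Prop :=
  forall M, N (L M) <= 1 /\ (forall D, N D <= 1 -> inner M (L M) <= inner M D).

(* An LMO attains the supremum defining the dual norm: ||X||_(i)^dagger =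
   <X, LMO_i(-X)>.  Hence P := sum_i alpha_i ||.||_(i)^dagger is a norm which
   dominates alpha_j ||.||_(j)^dagger for some alpha_j > 0, so its dual N is a
   norm obeying the Hoelder inequality <D, X> <= N(D) P(X).  For
   L(M) := sum_i alpha_i LMO_i(M) one gets <L(M), X> <= P(X), i.e. N(L(M)) <= 1,
   and <M, L(M)> = -P(-M) <= -<D, -M> = <M, D> whenever N(D) <= 1. *)

From mathcomp Require Import all_boot all_order all_algebra.
From mathcomp Require Import all_classical all_reals.
Import Order.TTheory GRing.Theory Num.Theory.
Set Implicit Arguments. Unset Strict Implicit.
Local Open Scope classical_set_scope.
Local Open Scope ring_scope.

Section Inner.
Variables (R : realType) (d : nat).
Implicit Types (u v w : 'rV[R]_d) (a : R).

Lemma innerC u v : inner u v = inner v u.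
Proof. by rewrite /inner !mxE; apply: eq_bigr => k _; rewrite !mxE mulrC. Qed.

Lemma innerZl a u v : inner (a *: u) v = a * inner u v.
Proof. by rewrite /inner -scalemxAl mxE. Qed.

Lemma innerNl u v : inner (- u) v = - inner u v.
Proof. by rewrite /inner mulNmx mxE. Qed.

Lemma innerDl u v w : inner (u + v) w = inner u w + inner v w.
Proof. by rewrite /inner mulmxDl mxE. Qed.

Lemma inner0r u : inner u 0 = 0.
Proof. by rewrite /inner trmx0 mulmx0 mxE. Qed.

Lemma innerZr a u v : inner u (a *: v) = a * inner u v.
Proof. by rewrite innerC innerZl innerC. Qed.

Lemma innerNr u v : inner u (- v) = - inner u v.
Proof. by rewrite innerC innerNl innerC. Qed.

Lemma inner_suml n (a : 'I_n -> R) (u : 'I_n -> 'rV[R]_d) v :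
  inner (\sum_i a i *: u i) v = \sum_i a i * inner (u i) v.
Proof.
rewrite /inner mulmx_suml summxE; apply: eq_bigr => i _.
by rewrite -scalemxAl mxE.
Qed.

Lemma inner_self_le0 u : inner u u <= 0 -> u = 0.
Proof.
have sq_ge0 k : 0 <= u 0 k * u 0 k by rewrite -expr2 sqr_ge0.
rewrite /inner mxE (eq_bigr (fun k => u 0 k * u 0 k)) => [|k _]; last first.
  by rewrite mxE.
move=> le0; have: \sum_k u 0 k * u 0 k == 0 by rewrite eq_le le0 sumr_ge0.
rewrite psumr_eq0 // => /allP u0; apply/rowP => k; rewrite mxE.
by have := u0 k (mem_index_enum _); rewrite /= mulf_eq0 orbb => /eqP.
Qed.

End Inner.

Section NormFacts.
Variables (R : realType) (d : nat) (N : 'rV[R]_d -> R).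
Hypothesis N_norm : is_norm N.

Lemma norm_at0 : N 0 = 0.
Proof. by case: N_norm => _ NZ _; rewrite -(scale0r 0) NZ normr0 mul0r. Qed.

Lemma norm_opp x : N (- x) = N x.
Proof. by case: N_norm => _ NZ _; rewrite -scaleN1r NZ normrN1 mul1r. Qed.

Lemma norm_ge0 x : 0 <= N x.
Proof.
case: N_norm => _ _ ND; have := ND x (- x).
by rewrite subrr norm_at0 norm_opp -mulr2n pmulrn_lge0.
Qed.

End NormFacts.

(* Without this, [sup] in [dual_norm] may return its junk value.  In finite
   dimension it holds for every norm; here it is derived from the LMOs. *)
Definition functionals_bounded (R : realType) (d : nat) (P : 'rV[R]_d -> R) :=
  forall D, exists c, forall X, P X <= 1 -> inner D X <= c.

Section DualNorm.
Variables (R : realType) (d : nat) (P : 'rV[R]_d -> R).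
Hypothesis P_norm : is_norm P.

Lemma dual_norm_le c D :
  (forall X, P X <= 1 -> inner D X <= c) -> dual_norm P D <= c.
Proof.
move=> Dc; apply: ge_sup => [|_ [X PX <-]]; last exact: Dc.
by exists (inner D 0), 0 => //=; rewrite norm_at0.
Qed.

Lemma inner_le_norm_scale c D :
  (forall X, P X <= 1 -> inner D X <= c) -> forall X, inner D X <= c * P X.
Proof.
move=> Dc X; have [PX0|PX_neq0] := eqVneq (P X) 0.
  by case: P_norm => P0 _ _; rewrite PX0 mulr0 (P0 _ PX0) inner0r.
have PX_gt0 : 0 < P X by rewrite lt_def PX_neq0 norm_ge0.
have := Dc ((P X)^-1 *: X); case: P_norm => _ PZ _.
rewrite PZ ger0_norm ?invr_ge0 ?norm_ge0 // mulVf // lexx innerZr => /(_ isT).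
by rewrite ler_pdivrMl // mulrC.
Qed.

Hypothesis P_bounded : functionals_bounded P.

Lemma dual_norm_ub D X : P X <= 1 -> inner D X <= dual_norm P D.
Proof.
have [c Dc] := P_bounded D.
move=> PX; apply: sup_upper_bound; last by exists X.
by split; [exists (inner D X), X | exists c => _ [Y PY <-]; apply: Dc].
Qed.

Lemma inner_le_dual_norm D X : inner D X <= dual_norm P D * P X.
Proof. by apply: inner_le_norm_scale => Y; apply: dual_norm_ub. Qed.

Lemma abs_inner_le_dual_norm D X : P X <= 1 -> `|inner D X| <= dual_norm P D.
Proof.
move=> PX; rewrite ler_norml dual_norm_ub // andbT lerNl -innerNr.
by rewrite dual_norm_ub // norm_opp.
Qed.

Lemma dual_norm_ge0 D : 0 <= dual_norm P D.
Proof. by rewrite -(inner0r D) dual_norm_ub // norm_at0. Qed.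

Lemma dual_normZ_le a D : dual_norm P (a *: D) <= `|a| * dual_norm P D.
Proof.
apply: dual_norm_le => X PX; rewrite innerZl (le_trans (ler_norm _)) //.
by rewrite normrM ler_wpM2l // abs_inner_le_dual_norm.
Qed.

Lemma dual_norm_is_norm : is_norm (dual_norm P).
Proof.
split.
- move=> D ND0; apply: inner_self_le0.
  by have := inner_le_dual_norm D D; rewrite ND0 mul0r.
- move=> a D; apply/eqP; rewrite eq_le dual_normZ_le /=.
  have [->|a_neq0] := eqVneq a 0; first by rewrite normr0 mul0r dual_norm_ge0.
  have := dual_normZ_le a^-1 (a *: D).
  by rewrite scalerA mulVf // scale1r normrV ?unitfE // ler_pdivlMl ?normr_gt0.
- move=> D D'; apply: dual_norm_le => X PX.
  by rewrite innerDl lerD // dual_norm_ub.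
Qed.

Lemma dual_functionals_bounded : functionals_bounded (dual_norm P).
Proof.
move=> D; exists (P D) => X NX; rewrite innerC.
by rewrite (le_trans (inner_le_dual_norm X D)) // ler_piMl // norm_ge0.
Qed.

End DualNorm.

Section LMO.
Variables (R : realType) (d : nat).
Variables (N : 'rV[R]_d -> R) (L : 'rV[R]_d -> 'rV[R]_d).
Hypotheses (N_norm : is_norm N) (L_LMO : is_LMO N L).

Lemma LMO_ball (M : 'rV[R]_d) : N (L M) <= 1.
Proof. by case: (L_LMO M). Qed.

Lemma LMO_opp_maximizes X D : N D <= 1 -> inner X D <= inner X (L (- X)).
Proof. by case: (L_LMO (- X)) => _ min /min; rewrite !innerNl lerN2. Qed.

Lemma LMO_functionals_bounded : functionals_bounded N.
Proof. by move=> D; exists (inner D (L (- D))) => X; apply: LMO_opp_maximizes. Qed.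

Lemma dual_norm_LMO X : dual_norm N X = inner X (L (- X)).
Proof.
apply/eqP; rewrite eq_le dual_norm_le //=; last exact: LMO_opp_maximizes.
exact: dual_norm_ub LMO_functionals_bounded _ _ (LMO_ball _).
Qed.

End LMO.

Section ConicCombination.
Variables (R : realType) (d n : nat).
Variables (norms : 'I_n -> 'rV[R]_d -> R) (alpha : 'I_n -> R).
Hypothesis norms_norm : forall i, is_norm (norms i).
Hypothesis alpha_ge0 : forall i, 0 <= alpha i.
Variable j : 'I_n.
Hypothesis alpha_j_neq0 : alpha j != 0.

Let comb x := \sum_i alpha i * norms i x.

Lemma norm_term_le_comb x : alpha j * norms j x <= comb x.
Proof.
rewrite /comb (bigD1 j) //= lerDl sumr_ge0 // => i _.
by rewrite mulr_ge0 // norm_ge0.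
Qed.

Lemma conic_combination_is_norm : is_norm comb.
Proof.
split.
- move=> x comb0; have: alpha j * norms j x == 0.
    by rewrite eq_le mulr_ge0 ?norm_ge0 // andbT -comb0 norm_term_le_comb.
  rewrite mulf_eq0 (negbTE alpha_j_neq0) => /eqP.
  by case: (norms_norm j) => + _ _; apply.
- move=> a x; rewrite /comb mulr_sumr; apply: eq_bigr => i _.
  by case: (norms_norm i) => _ NZ _; rewrite NZ mulrCA.
- move=> x y; rewrite /comb -big_split ler_sum // => i _.
  by case: (norms_norm i) => _ _ ND; rewrite /= -mulrDr ler_wpM2l.
Qed.

Lemma conic_combination_functionals_bounded :
  functionals_bounded (norms j) -> functionals_bounded comb.
Proof.
move=> bounded_j D; have [c Dc] := bounded_j D.
have alpha_j_gt0 : 0 < alpha j by rewrite lt_def alpha_j_neq0 alpha_ge0.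
exists (c / alpha j) => X combX.
rewrite ler_pdivlMr // mulrC -innerZr; apply: Dc.
case: (norms_norm j) => _ NZ _; rewrite NZ ger0_norm //.
exact: le_trans (norm_term_le_comb X) combX.
Qed.

End ConicCombination.

Section DualOfConicCombination.
Variables (R : realType) (d n : nat).
Variables (norms : 'I_n -> 'rV[R]_d -> R) (LMOs : 'I_n -> 'rV[R]_d -> 'rV[R]_d).
Variable alpha : 'I_n -> R.
Hypothesis norms_norm : forall i, is_norm (norms i).
Hypothesis LMOs_LMO : forall i, is_LMO (norms i) (LMOs i).
Hypothesis alpha_ge0 : forall i, 0 <= alpha i.
Variable j : 'I_n.
Hypothesis alpha_j_neq0 : alpha j != 0.

Let P M := \sum_i alpha i * dual_norm (norms i) M.

Let dual_norms_norm i : is_norm (dual_norm (norms i)).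
Proof.
exact: dual_norm_is_norm (norms_norm i) (LMO_functionals_bounded (LMOs_LMO i)).
Qed.

Lemma conic_combination_dual_norms_is_norm : is_norm P.
Proof. exact: (conic_combination_is_norm dual_norms_norm alpha_ge0 alpha_j_neq0). Qed.

Lemma conic_combination_dual_norms_bounded : functionals_bounded P.
Proof.
apply: (conic_combination_functionals_bounded dual_norms_norm alpha_ge0 alpha_j_neq0).
exact: dual_functionals_bounded (norms_norm j) (LMO_functionals_bounded (LMOs_LMO j)).
Qed.

Lemma conic_combination_LMO_is_LMO :
  is_LMO (dual_norm P) (fun M => \sum_i alpha i *: LMOs i M).
Proof.
have P_norm := conic_combination_dual_norms_is_norm.
have P_bounded := conic_combination_dual_norms_bounded.
move=> M; split.
- apply: (dual_norm_le P_norm) => X PX; rewrite inner_suml (le_trans _ PX) //.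
  apply: ler_sum => i _; rewrite ler_wpM2l // innerC.
  exact: dual_norm_ub (LMO_functionals_bounded (LMOs_LMO i)) _ _
    (LMO_ball (LMOs_LMO i) M).
- move=> D ND.
  have PNM : P (- M) = - inner M (\sum_i alpha i *: LMOs i M).
    rewrite innerC inner_suml -sumrN; apply: eq_bigr => i _.
    by rewrite (dual_norm_LMO (norms_norm i) (LMOs_LMO i)) opprK innerNl innerC mulrN.
  have := le_trans (inner_le_dual_norm P_norm P_bounded D (- M))
    (ler_piMl (norm_ge0 P_norm _) ND).
  by rewrite PNM innerNr lerN2 [inner D M]innerC.
Qed.

End DualOfConicCombination.

Unset Implicit Arguments.

Theorem corollary5 (R : realType) (d n : nat)
  (norms : 'I_n -> 'rV[R]_d -> R) (LMOs : 'I_n -> 'rV[R]_d -> 'rV[R]_d)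
  (alpha : 'I_n -> R) :
  (forall i, is_norm (norms i)) ->
  (forall i, is_LMO (norms i) (LMOs i)) ->
  (forall i, 0 <= alpha i) ->
  (exists i, alpha i != 0) ->
  let N := dual_norm (fun M => \sum_(i < n) alpha i * dual_norm (norms i) M) in
  let L := fun M => \sum_(i < n) alpha i *: LMOs i M in
  [/\ is_norm N, is_LMO N L &
      forall (X Mt : nat -> 'rV[R]_d) (gamma : nat -> R),
        (forall t, X t.+1 - X t = gamma t *: \sum_(i < n) alpha i *: LMOs i (Mt t)) ->
        forall t, X t.+1 - X t = gamma t *: L (Mt t)].
Proof.
move=> norms_norm LMOs_LMO alpha_ge0 [j alpha_j_neq0] N L.
have P_norm := conic_combination_dual_norms_is_norm
  norms_norm LMOs_LMO alpha_ge0 alpha_j_neq0.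
have P_bounded := conic_combination_dual_norms_bounded
  norms_norm LMOs_LMO alpha_ge0 alpha_j_neq0.
split; first exact: dual_norm_is_norm P_norm P_bounded.
- exact: (conic_combination_LMO_is_LMO norms_norm LMOs_LMO alpha_ge0 alpha_j_neq0).
- by move=> X Mt gamma step t; rewrite step.
Qed.
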